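(* Suppose choices follow the Luce choice model with true parameter $\theta^\star\in\Theta_b$ and all (fixed) comparison sets have cardinality $k\ge2$. Let $\widehat\theta_{k-1}\in\arg\max_{\theta\in\Theta_b}\ell_{k-1}(\theta)$. If $\lambda_2(L_M)\ge128(k-1)^2e^{2b}\,n\log(n)/m$, then with probability at least $1-3/n$, $$\mathrm{MSE}(\widehat\theta_{k-1},\theta^\star)\le D^2\frac{n(\log n+2)}{\lambda_2(L_M)^2}\frac1m,\qquad D=16\sqrt2\sqrt{k(k-1)^3}\,e^{2b}.$$
   Context: Items $N=\{1,\dots,n\}$; observations $(S_t,y_t)$, $t=1,\dots,m$. Luce choice model: choices conditionally independent with $\Pr[y_t=i\mid S_t]=e^{\theta^\star_i}/\sum_{v\in S_t}e^{\theta^\star_v}$. Pairwise probabilities $p_{i,j}(\theta)=e^{\theta_i}/(e^{\theta_i}+e^{\theta_j})$. Pseudo log-likelihood $\ell_{k-1}(\theta)=\sum_{t=1}^m\sum_{v\in S_t\setminus\{y_t\}}\log p_{y_t,v}(\theta)$. $\Theta_b=\{\theta\in[-b,b]^n:\sum\theta_i=0\}$; $\mathrm{MSE}(\widehat\theta,\theta^\star)=\frac1n\|\widehat\theta-\theta^\star\|_2^2$. $M$ has zero diagonal and off-diagonal entries $\frac nm\#\{t:\{i,j\}\subseteq S_t\}$; $L_A=\mathrm{diag}(A\mathbf 1)-A$; $\lambda_2$ is the second smallest eigenvalue. *)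

From Stdlib Require Import Reals Lra Lia List.
Import ListNotations.
Open Scope R_scope.

(* Items are 0..n-1; observations are t = 0..m-1. A parameter vector is
   a function nat -> R of which only indices < n matter. *)

Fixpoint rsum (n : nat) (f : nat -> R) : R :=
  match n with O => 0 | S n' => rsum n' f + f n' end.

Fixpoint rprod (n : nat) (f : nat -> R) : R :=
  match n with O => 1 | S n' => rprod n' f * f n' end.

Definition lsum (l : list nat) (f : nat -> R) : R :=
  fold_right (fun v acc => f v + acc) 0 l.

Definition luce (th : nat -> R) (St : list nat) (i : nat) : R :=
  exp (th i) / lsum St (fun v => exp (th v)).

Definition pij (th : nat -> R) (i j : nat) : R :=
  exp (th i) / (exp (th i) + exp (th j)).

Fixpoint outcomes (S : nat -> list nat) (m : nat) : list (list nat) :=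
  match m with
  | O => [ [] ]
  | Datatypes.S m' =>
      flat_map (fun ys => map (fun i => ys ++ [i]) (S m')) (outcomes S m')
  end.

Definition yat (ys : list nat) (t : nat) : nat := nth t ys O.

Definition prob (S : nat -> list nat) (m : nat) (th : nat -> R)
  (ev : list nat -> bool) : R :=
  fold_right
    (fun ys acc =>
       (if ev ys then rprod m (fun t => luce th (S t) (yat ys t)) else 0) + acc)
    0 (outcomes S m).

Definition ell (S : nat -> list nat) (m : nat) (th : nat -> R) (ys : list nat) : R :=
  rsum m (fun t =>
    lsum (filter (fun v => negb (Nat.eqb v (yat ys t))) (S t))
         (fun v => ln (pij th (yat ys t) v))).

Definition in_Theta (n : nat) (b : R) (th : nat -> R) : Prop :=
  (forall i, (i < n)%nat -> -b <= th i <= b) /\ rsum n th = 0.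

Definition MSE (n : nat) (th1 th2 : nat -> R) : R :=
  / INR n * rsum n (fun i => (th1 i - th2 i) ^ 2).

Definition Mmat (n m : nat) (S : nat -> list nat) (i j : nat) : R :=
  if Nat.eqb i j then 0
  else INR n / INR m *
       rsum m (fun t => if in_dec Nat.eq_dec i (S t) then
                          if in_dec Nat.eq_dec j (S t) then 1 else 0
                        else 0).

Definition Lap (n : nat) (A : nat -> nat -> R) (i j : nat) : R :=
  if Nat.eqb i j then rsum n (fun l => A i l) - A i j else - A i j.

(* Then mu 0 <= mu 1 <= ... are the eigenvalues of L in increasing order,
   and lambda_2(L) = mu 1. *)
Definition sorted_eigendecomp (n : nat) (L : nat -> nat -> R)
  (mu : nat -> R) (V : nat -> nat -> R) : Prop :=
  (forall a c, (a < n)%nat -> (c < n)%nat ->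
     rsum n (fun i => V a i * V c i) = if Nat.eqb a c then 1 else 0) /\
  (forall a i, (a < n)%nat -> (i < n)%nat ->
     rsum n (fun j => L i j * V a j) = mu a * V a i) /\
  (forall a c, (a <= c)%nat -> (c < n)%nat -> mu a <= mu c).

Definition Rleb (x y : R) : bool := if Rle_dec x y then true else false.

(* Write [Delta = thhat - thstar] and let [G] be the score, i.e. the sum over the observations
   of the gradients at [thstar] of the terms of the pseudo-likelihood.

   Deterministically: [ln logistic] is strongly concave on [[-2b, 2b]] with modulus
   [e^(-2b)/4], so the optimality of [thhat] gives [Delta . G >= e^(-2b)/8 * Q], where [Q]
   sums, over the observations, the squared differences of [Delta] between the chosen item and
   the other items of the set. A star dominates the complete graph on its vertices up to the
   factor [2k], so [Q >= m / (k n) * Delta^T L_M Delta >= m lambda_2 / (k n) * |Delta|^2],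
   because [Delta] sums to zero. Young's inequality then yields [kappa^2 |Delta|^2 <= |G|^2]
   with [kappa = e^(-2b) m lambda_2 / (8 k n)].

   Probabilistically: under the Luce model the increments of [G] have mean zero and bounded
   norm, so [G] is a vector martingale. Applying Hoeffding's lemma to one increment at a time
   bounds [E exp (|G|^2 / A)] by [e^2] for [A = 8 (k-1)^3 m / k], and Markov's inequality gives
   [|G|^2 <= A (ln n + 2)] with probability at least [1 - 1/n]. *)

From Stdlib Require Import Reals Lra Lia List.
From Coquelicot Require Import Coquelicot.
From mathcomp Require all_boot all_algebra Rstruct.
Import ListNotations.
Open Scope R_scope.

Module OrthonormalBasis.
Import all_boot all_algebra Rstruct GRing.Theory.
Local Open Scope ring_scope.

Lemma rsum_big (n : nat) (f : nat -> R) : rsum n f = \sum_(i < n) f i.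
Proof.
elim: n => [|n IH] /=; first by rewrite big_ord0.
by rewrite big_ord_recr /= IH.
Qed.

Lemma eqb_ord_nat n (a c : 'I_n) : (if Nat.eqb a c then 1 else 0) = (a == c)%:R :> R.
Proof.
case: (eqVneq a c) => [->|ne]; first by rewrite Nat.eqb_refl.
suff -> : Nat.eqb a c = false by [].
by apply/PeanoNat.Nat.eqb_neq => E; move: ne; rewrite (val_inj E) eqxx.
Qed.

Local Close Scope ring_scope.

(* [V V^T = 1] implies [V^T V = 1]: a one-sided inverse of a square matrix is two-sided. *)
Lemma orthonormal_cols_of_rows (n : nat) (V : nat -> nat -> R) :
  (forall a c, (a < n)%coq_nat -> (c < n)%coq_nat ->
     rsum n (fun i => V a i * V c i) = if Nat.eqb a c then 1 else 0) ->
  forall i j, (i < n)%coq_nat -> (j < n)%coq_nat ->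
     rsum n (fun a => V a i * V a j) = if Nat.eqb i j then 1 else 0.
Proof.
Local Open Scope ring_scope.
move=> orthoV i j /ltP ltin /ltP ltjn.
pose W : 'M[R]_n := \matrix_(a < n, i < n) V a i.
have WWt : W *m W^T = 1%:M.
  apply/matrixP => a c; rewrite !mxE.
  rewrite -eqb_ord_nat -(orthoV a c (ltP (ltn_ord a)) (ltP (ltn_ord c))) rsum_big.
  by apply: eq_bigr => l _; rewrite !mxE.
have /(congr1 (fun M : 'M[R]_n => M (Ordinal ltin) (Ordinal ltjn))) := mulmx1C WWt.
rewrite !mxE rsum_big -(@eqb_ord_nat n (Ordinal ltin) (Ordinal ltjn)) /= => <-.
by apply: eq_bigr => l _; rewrite !mxE.
Qed.

End OrthonormalBasis.

Lemma rsum_ext n f g : (forall i, (i < n)%nat -> f i = g i) -> rsum n f = rsum n g.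
Proof. induction n; simpl; intros H; auto. rewrite IHn, H; auto. Qed.

Lemma rsum_plus n f g : rsum n (fun i => f i + g i) = rsum n f + rsum n g.
Proof. induction n; simpl. ring. rewrite IHn. ring. Qed.

Lemma rsum_minus n f g : rsum n (fun i => f i - g i) = rsum n f - rsum n g.
Proof. induction n; simpl. ring. rewrite IHn. ring. Qed.

Lemma rsum_scal n c f : rsum n (fun i => c * f i) = c * rsum n f.
Proof. induction n; simpl. ring. rewrite IHn. ring. Qed.

Lemma rsum_0 n : rsum n (fun _ => 0) = 0.
Proof. induction n; simpl; auto. rewrite IHn. ring. Qed.

Lemma rsum_const_1 n : rsum n (fun _ => 1) = INR n.
Proof. induction n; simpl rsum. reflexivity. rewrite IHn, S_INR. ring. Qed.

Lemma rsum_le n f g : (forall i, (i < n)%nat -> f i <= g i) -> rsum n f <= rsum n g.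
Proof. induction n; simpl; intros H. lra. apply Rplus_le_compat; auto. Qed.

Lemma rsum_nonneg n f : (forall i, (i < n)%nat -> 0 <= f i) -> 0 <= rsum n f.
Proof. intros H. rewrite <- (rsum_0 n). apply rsum_le; auto. Qed.

Lemma rsum_swap n m f :
  rsum n (fun i => rsum m (fun j => f i j)) = rsum m (fun j => rsum n (fun i => f i j)).
Proof. induction n; simpl. now rewrite rsum_0. now rewrite IHn, <- rsum_plus. Qed.

Lemma rsum_mul_rsum n m w g :
  rsum n (fun i => w i * rsum m (fun a => g a i)) = rsum m (fun a => rsum n (fun i => w i * g a i)).
Proof. rewrite <- rsum_swap. apply rsum_ext. intros i _. now rewrite <- rsum_scal. Qed.

Lemma rsum_prod n a b : rsum n a * rsum n b = rsum n (fun i => rsum n (fun j => a i * b j)).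
Proof.
  rewrite Rmult_comm, <- rsum_scal. apply rsum_ext. intros i _.
  rewrite Rmult_comm, <- rsum_scal. apply rsum_ext. intros; ring.
Qed.

Lemma rsum_delta n i f : (i < n)%nat ->
  rsum n (fun j => f j * (if Nat.eqb i j then 1 else 0)) = f i.
Proof.
  induction n; simpl; intros H. lia.
  destruct (Nat.eq_dec i n) as [->|ne].
  - rewrite Nat.eqb_refl, (rsum_ext n _ (fun _ => 0)), rsum_0. ring.
    intros j Hj. destruct (Nat.eqb_spec n j). lia. ring.
  - rewrite IHn by lia. destruct (Nat.eqb_spec i n). lia. ring.
Qed.

Lemma rsum_shift n f : rsum (S n) f = f O + rsum n (fun a => f (S a)).
Proof. induction n; simpl. ring. simpl in IHn. rewrite IHn. ring. Qed.

Lemma rsum_S_tail0 n f : (forall a, (a < n)%nat -> f (S a) = 0) -> rsum (S n) f = f O.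
Proof.
  intros H. rewrite rsum_shift, (rsum_ext n _ (fun _ => 0)), rsum_0 by auto. ring.
Qed.

Lemma lsum_cons a l f : lsum (a :: l) f = f a + lsum l f.
Proof. reflexivity. Qed.

Lemma lsum_ext l f g : (forall i, In i l -> f i = g i) -> lsum l f = lsum l g.
Proof.
  induction l; intros H; simpl; auto.
  rewrite H, IHl; simpl; auto. intros; apply H; simpl; auto.
Qed.

Lemma lsum_plus l f g : lsum l (fun i => f i + g i) = lsum l f + lsum l g.
Proof. induction l; simpl. ring. rewrite IHl. ring. Qed.

Lemma lsum_minus l f g : lsum l (fun i => f i - g i) = lsum l f - lsum l g.
Proof. induction l; simpl. ring. rewrite IHl. ring. Qed.

Lemma lsum_scal l c f : lsum l (fun i => c * f i) = c * lsum l f.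
Proof. induction l; simpl. ring. rewrite IHl. ring. Qed.

Lemma lsum_const l c : lsum l (fun _ => c) = INR (length l) * c.
Proof. induction l; simpl lsum. simpl; ring. rewrite IHl. simpl length. rewrite S_INR. ring. Qed.

Lemma lsum_le l f g : (forall i, In i l -> f i <= g i) -> lsum l f <= lsum l g.
Proof. induction l; intros H; simpl. lra. apply Rplus_le_compat; simpl in *; auto. Qed.

Lemma lsum_nonneg l f : (forall i, In i l -> 0 <= f i) -> 0 <= lsum l f.
Proof.
  intros H. replace 0 with (lsum l (fun _ => 0)) by (rewrite lsum_const; ring).
  now apply lsum_le.
Qed.

Lemma lsum_swap l1 l2 f :
  lsum l1 (fun i => lsum l2 (fun j => f i j)) = lsum l2 (fun j => lsum l1 (fun i => f i j)).
Proof.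
  induction l1; simpl. rewrite lsum_const; ring.
  rewrite IHl1, <- lsum_plus. reflexivity.
Qed.

Lemma lsum_rsum l n f :
  lsum l (fun v => rsum n (fun i => f v i)) = rsum n (fun i => lsum l (fun v => f v i)).
Proof.
  induction l; simpl. now rewrite rsum_0.
  rewrite IHl, <- rsum_plus. reflexivity.
Qed.

Lemma lsum_delta l j f : NoDup l -> In j l ->
  lsum l (fun u => f u * (if Nat.eqb j u then 1 else 0)) = f j.
Proof.
  induction l as [|a l IHl]; intros Hnd Hj. destruct Hj.
  inversion Hnd; subst. rewrite lsum_cons. destruct Hj as [<-|Hj].
  - rewrite Nat.eqb_refl, (lsum_ext l _ (fun _ => 0)), lsum_const. ring.
    intros i Hi. destruct (Nat.eqb_spec a i); subst; tauto || ring.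
  - rewrite IHl; auto. destruct (Nat.eqb_spec j a); subst; tauto || ring.
Qed.

Lemma lsum_as_rsum l n f : NoDup l -> (forall i, In i l -> (i < n)%nat) ->
  lsum l f = rsum n (fun i => if in_dec Nat.eq_dec i l then f i else 0).
Proof.
  intros Hnd Hin. rewrite (lsum_ext l f (fun i => rsum n (fun j => f j * (if Nat.eqb i j then 1 else 0)))).
  - rewrite lsum_rsum. apply rsum_ext. intros j _.
    destruct (in_dec Nat.eq_dec j l) as [Hj|Hj].
    + rewrite (lsum_ext l _ (fun i => f j * (if Nat.eqb j i then 1 else 0))), lsum_delta; auto.
      intros i _. rewrite Nat.eqb_sym. reflexivity.
    + rewrite (lsum_ext l _ (fun _ => 0)). rewrite lsum_const. ring.
      intros i Hi. destruct (Nat.eqb_spec i j); subst; tauto || ring.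
  - intros i Hi. now rewrite rsum_delta by auto.
Qed.

Definition remove_elt (l : list nat) (y : nat) : list nat :=
  filter (fun v => negb (Nat.eqb v y)) l.

Lemma In_remove_elt l y v : In v (remove_elt l y) <-> In v l /\ v <> y.
Proof. unfold remove_elt. rewrite filter_In. destruct (Nat.eqb_spec v y); simpl; intuition. Qed.

Lemma NoDup_remove_elt l y : NoDup l -> NoDup (remove_elt l y).
Proof. apply NoDup_filter. Qed.

Lemma lsum_remove_elt l y f : f y = 0 -> lsum (remove_elt l y) f = lsum l f.
Proof.
  intros H. induction l as [|a l IHl]; auto. unfold remove_elt in *; simpl filter.
  destruct (Nat.eqb_spec a y) as [->|]; simpl negb; cbv iota.
  - rewrite IHl, lsum_cons, H. ring.
  - now rewrite !lsum_cons, IHl.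
Qed.

Lemma length_remove_elt l y : NoDup l -> In y l -> length (remove_elt l y) = (length l - 1)%nat.
Proof.
  unfold remove_elt. induction l as [|a l IHl]; intros Hnd Hy. destruct Hy.
  inversion Hnd; subst. simpl. destruct (Nat.eqb_spec a y) as [->|ne]; simpl.
  - rewrite forallb_filter_id. lia.
    apply forallb_forall. intros v Hv. destruct (Nat.eqb_spec v y); subst; tauto.
  - destruct Hy as [|Hy]. congruence. rewrite IHl; auto. destruct l. destruct Hy. simpl. lia.
Qed.

Definition dot n (x v : nat -> R) : R := rsum n (fun i => x i * v i).
Definition sqnorm n (x : nat -> R) : R := rsum n (fun i => x i ^ 2).

Lemma sqnorm_nonneg n x : 0 <= sqnorm n x.
Proof. apply rsum_nonneg. intros; apply pow2_ge_0. Qed.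

Lemma sqnorm_ext n f g : (forall i, (i < n)%nat -> f i = g i) -> sqnorm n f = sqnorm n g.
Proof. intros H. apply rsum_ext. intros i Hi. now rewrite H. Qed.

Lemma sqnorm_dot n x : sqnorm n x = dot n x x.
Proof. apply rsum_ext. intros; ring. Qed.

Lemma sqnorm_plus n x v : sqnorm n (fun i => x i + v i) = sqnorm n x + 2 * dot n x v + sqnorm n v.
Proof. unfold sqnorm, dot. rewrite <- rsum_scal, <- !rsum_plus. apply rsum_ext. intros; ring. Qed.

Lemma cauchy_schwarz n x v : dot n x v ^ 2 <= sqnorm n x * sqnorm n v.
Proof.
  set (P := rsum n (fun i => rsum n (fun j => x i ^ 2 * v j ^ 2))).
  set (D := rsum n (fun i => rsum n (fun j => x i * v i * (x j * v j)))).
  assert (EP : sqnorm n x * sqnorm n v = P) by apply rsum_prod.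
  assert (ED : dot n x v ^ 2 = D) by (unfold dot, D; rewrite <- rsum_prod; ring).
  assert (Lagrange : rsum n (fun i => rsum n (fun j => (x i * v j - x j * v i) ^ 2)) = 2 * P - 2 * D).
  { rewrite (rsum_ext n _ (fun i => rsum n (fun j => x i ^ 2 * v j ^ 2)
       + rsum n (fun j => x j ^ 2 * v i ^ 2) - 2 * rsum n (fun j => x i * v i * (x j * v j)))).
    - rewrite rsum_minus, rsum_plus, rsum_scal, (rsum_swap n n (fun i j => x j ^ 2 * v i ^ 2)).
      fold P D. ring.
    - intros i _. rewrite <- rsum_scal, <- rsum_plus, <- rsum_minus. apply rsum_ext; intros; ring. }
  assert (0 <= rsum n (fun i => rsum n (fun j => (x i * v j - x j * v i) ^ 2))).
  { apply rsum_nonneg; intros; apply rsum_nonneg; intros; apply pow2_ge_0. }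
  lra.
Qed.

Lemma dot_le_young n x v c : 0 < c ->
  dot n x v <= c / 2 * sqnorm n x + / (2 * c) * sqnorm n v.
Proof.
  intros Hc. unfold dot, sqnorm. rewrite <- !rsum_scal, <- rsum_plus. apply rsum_le. intros i _.
  assert (0 <= (c * x i - v i) ^ 2) by apply pow2_ge_0.
  apply (Rmult_le_reg_l (2 * c)). lra.
  replace (2 * c * (c / 2 * x i ^ 2 + / (2 * c) * v i ^ 2)) with (c ^ 2 * x i ^ 2 + v i ^ 2)
    by (field; lra).
  nra.
Qed.

(** * The logistic function and Hoeffding's lemma *)

Lemma exp_le x y : x <= y -> exp x <= exp y.
Proof. intros [H|H]. left; now apply exp_increasing. subst; lra. Qed.

Lemma le_of_derive_sign f f' x0 x :
  (forall c, derivable_pt_lim f c (f' c)) ->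
  (forall c, Rmin x0 x <= c <= Rmax x0 x -> 0 <= (c - x0) * f' c) ->
  f x0 <= f x.
Proof.
  intros Hd Hs. destruct (Rtotal_order x0 x) as [Hlt|[->|Hgt]].
  - destruct (MVT_cor2 f f' x0 x Hlt (fun c _ => Hd c)) as [c [Hc Hcx]].
    rewrite Rmin_left, Rmax_right in Hs by lra.
    assert (0 <= (c - x0) * f' c) by (apply Hs; lra). nra.
  - lra.
  - destruct (MVT_cor2 f f' x x0 Hgt (fun c _ => Hd c)) as [c [Hc Hcx]].
    rewrite Rmin_right, Rmax_left in Hs by lra.
    assert (0 <= (c - x0) * f' c) by (apply Hs; lra). nra.
Qed.

Definition logistic (x : R) : R := / (1 + exp (- x)).

Lemma pij_logistic th i j : pij th i j = logistic (th i - th j).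
Proof.
  unfold pij, logistic. rewrite Ropp_minus_distr. unfold Rminus. rewrite exp_plus, exp_Ropp.
  pose proof (exp_pos (th i)); pose proof (exp_pos (th j)). field. split; lra.
Qed.

Lemma pij_pos th i j : 0 < pij th i j.
Proof.
  unfold pij. pose proof (exp_pos (th i)); pose proof (exp_pos (th j)).
  apply Rdiv_lt_0_compat; lra.
Qed.

Lemma pij_le_1 th i j : pij th i j <= 1.
Proof.
  unfold pij. pose proof (exp_pos (th i)); pose proof (exp_pos (th j)).
  apply (Rmult_le_reg_r (exp (th i) + exp (th j))). lra.
  unfold Rdiv. rewrite Rmult_assoc, Rinv_l by lra. lra.
Qed.

Lemma pij_sym th i j : pij th i j + pij th j i = 1.
Proof. unfold pij. pose proof (exp_pos (th i)); pose proof (exp_pos (th j)). field. lra. Qed.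

Lemma derivable_pt_lim_logistic x :
  derivable_pt_lim logistic x (logistic x * (1 - logistic x)).
Proof.
  apply is_derive_Reals. unfold logistic. pose proof (exp_pos (-x)).
  auto_derive. lra. field. lra.
Qed.

Lemma logistic_deriv_lb b x : -(2*b) <= x <= 2*b ->
  exp (-(2*b)) / 4 <= logistic x * (1 - logistic x).
Proof.
  intros Hx.
  replace (logistic x * (1 - logistic x)) with (exp (- x) / (1 + exp (- x)) ^ 2)
    by (unfold logistic; pose proof (exp_pos (-x)); field; lra).
  assert (Hlo : exp (-(2*b)) <= exp (-x)) by (apply exp_le; lra).
  assert (Hhi : exp (-x) <= exp (2*b)) by (apply exp_le; lra).
  assert (HL : exp (-(2*b)) * exp (2*b) = 1) by (rewrite <- exp_plus, Rplus_opp_l; apply exp_0).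
  pose proof (exp_pos (-x)). pose proof (exp_pos (-(2*b))).
  set (e := exp (-x)) in *. set (L := exp (-(2*b))) in *.
  apply (Rmult_le_reg_r ((1+e)^2)). nra.
  replace (e / (1 + e) ^ 2 * (1 + e) ^ 2) with e by (field; nra).
  destruct (Rle_dec e 1); nra.
Qed.

Lemma logistic_sub_ge b x0 x1 : -(2*b) <= x0 -> x0 <= x1 -> x1 <= 2*b ->
  exp (-(2*b)) / 4 * (x1 - x0) <= logistic x1 - logistic x0.
Proof.
  intros H0 H01 H1. set (c := exp (-(2*b)) / 4).
  enough (logistic x0 - c * x0 <= logistic x1 - c * x1) by lra.
  apply (le_of_derive_sign (fun x => logistic x - c * x)
           (fun x => logistic x * (1 - logistic x) - c)).
  - intros x. replace (logistic x * (1 - logistic x) - c) with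
      (logistic x * (1 - logistic x) - c * 1) by ring.
    apply derivable_pt_lim_minus. apply derivable_pt_lim_logistic.
    apply derivable_pt_lim_scal, derivable_pt_lim_id.
  - intros x Hx. rewrite Rmin_left, Rmax_right in Hx by lra.
    pose proof (logistic_deriv_lb b x ltac:(lra)). unfold c in *. nra.
Qed.

Lemma ln_logistic_strong_concave b d0 d1 : -(2*b) <= d0 <= 2*b -> -(2*b) <= d1 <= 2*b ->
  ln (logistic d1) - ln (logistic d0)
  <= (1 - logistic d0) * (d1 - d0) - exp (-(2*b)) / 8 * (d1 - d0) ^ 2.
Proof.
  intros H0 H1. set (c := exp (-(2*b)) / 4).
  set (h := fun x => ln (logistic d0) + (1 - logistic d0) * (x - d0) - c / 2 * (x - d0) ^ 2
                     - ln (logistic x)).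
  enough (h d0 <= h d1) by (unfold h, c in *; lra).
  apply (le_of_derive_sign h (fun x => (1 - logistic d0) - c * (x - d0) - (1 - logistic x))).
  - intros x. apply is_derive_Reals. unfold h, logistic.
    pose proof (exp_pos (-x)). pose proof (exp_pos (-d0)).
    auto_derive. repeat split; try lra. apply Rinv_0_lt_compat. lra. field. lra.
  - intros x Hx. assert (Hb : -(2*b) <= x <= 2*b) by (unfold Rmin, Rmax in Hx; destruct Rle_dec; lra).
    destruct (Rle_dec d0 x).
    + pose proof (logistic_sub_ge b d0 x ltac:(lra) ltac:(lra) ltac:(lra)) as Hsub. fold c in Hsub. nra.
    + pose proof (logistic_sub_ge b x d0 ltac:(lra) ltac:(lra) ltac:(lra)) as Hsub. fold c in Hsub. nra.
Qed.

Lemma mul_div_sq_add_le u w : 0 <= u -> 0 <= w -> 0 < w + u -> u * w / (w + u) ^ 2 <= 1 / 4.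
Proof.
  intros Hu Hw Huw. apply (Rmult_le_reg_r ((w + u) ^ 2)). nra.
  replace (u * w / (w + u) ^ 2 * (w + u) ^ 2) with (u * w) by (field; lra).
  assert (0 <= (u - w) ^ 2) by apply pow2_ge_0. nra.
Qed.

Lemma hoeffding_log_mgf p s : 0 <= p <= 1 -> 0 <= s ->
  - p * s + ln (1 - p + p * exp s) <= s ^ 2 / 8.
Proof.
  intros Hp Hs.
  assert (Hpos : forall x, 0 < 1 - p + p * exp x).
  { intros x. pose proof (exp_pos x). destruct (Req_dec p 0) as [->|]; nra. }
  set (phi := fun x => - p * x + ln (1 - p + p * exp x)).
  set (phi' := fun x => - p + p * exp x / (1 - p + p * exp x)).
  set (phi'' := fun x => p * exp x * (1 - p) / (1 - p + p * exp x) ^ 2).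
  assert (Hphi : forall x, derivable_pt_lim phi x (phi' x)).
  { intros x. apply is_derive_Reals. unfold phi, phi'. pose proof (Hpos x).
    auto_derive. lra. field. lra. }
  assert (Hphi' : forall x, derivable_pt_lim phi' x (phi'' x)).
  { intros x. apply is_derive_Reals. unfold phi', phi''. pose proof (Hpos x).
    auto_derive. lra. field. lra. }
  assert (Hphi''_le : forall x, phi'' x <= 1 / 4).
  { intros x. pose proof (exp_pos x). apply mul_div_sq_add_le; nra. }
  assert (Hphi'_le : forall x, 0 <= x -> phi' x <= x / 4).
  { intros x Hx. enough (0 / 4 - phi' 0 <= x / 4 - phi' x).
    { unfold phi' in *. rewrite exp_0 in *. replace (- p + p * 1 / (1 - p + p * 1)) with 0 in *
        by (field; lra). lra. }
    apply (le_of_derive_sign (fun x => x / 4 - phi' x) (fun x => / 4 - phi'' x)).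
    - intros y. apply derivable_pt_lim_minus; [|apply Hphi'].
      apply is_derive_Reals. auto_derive. auto. field.
    - intros c Hc. rewrite Rmin_left, Rmax_right in Hc by lra.
      pose proof (Hphi''_le c). nra. }
  enough (0 ^ 2 / 8 - phi 0 <= s ^ 2 / 8 - phi s).
  { unfold phi in *. rewrite exp_0 in *. replace (1 - p + p * 1) with 1 in * by ring.
    rewrite ln_1 in *. lra. }
  apply (le_of_derive_sign (fun x => x ^ 2 / 8 - phi x) (fun x => x / 4 - phi' x)).
  - intros x. apply is_derive_Reals.
    apply (is_derive_minus (fun x => x ^ 2 / 8) phi). auto_derive. auto. field.
    now apply is_derive_Reals.
  - intros c Hc. rewrite Rmin_left, Rmax_right in Hc by lra.
    pose proof (Hphi'_le c ltac:(lra)). nra.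
Qed.

Lemma hoeffding_two_point lo hi : lo <= 0 -> 0 <= hi -> lo < hi ->
  (hi * exp lo - lo * exp hi) / (hi - lo) <= exp ((hi - lo) ^ 2 / 8).
Proof.
  intros Hlo Hhi Hlt. set (r := hi - lo). set (p := - lo / r).
  assert (Hr : 0 < r) by (unfold r; lra).
  assert (Hp : 0 <= p <= 1).
  { unfold p. split; [apply Rdiv_le_0_compat; lra|].
    apply (Rmult_le_reg_r r); auto. unfold Rdiv. rewrite Rmult_assoc, Rinv_l by lra. unfold r; lra. }
  assert (Elo : lo = - p * r) by (unfold p; field; lra).
  assert (Ehi : hi = (1 - p) * r) by (unfold p, r; field; lra).
  assert (Hq : 0 < 1 - p + p * exp r).
  { pose proof (exp_pos r). destruct (Req_dec p 0) as [->|]; nra. }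
  replace ((hi * exp lo - lo * exp hi) / r) with (exp (- p * r + ln (1 - p + p * exp r))).
  - apply exp_le, hoeffding_log_mgf; lra.
  - rewrite exp_plus, exp_ln by auto. rewrite Ehi, Elo. clearbody r p.
    replace ((1 - p) * r) with (r + - p * r) by ring. rewrite exp_plus. field. lra.
Qed.

Lemma exp_le_chord lo hi z : lo < hi -> lo <= z <= hi ->
  exp z <= ((hi - z) * exp lo + (z - lo) * exp hi) / (hi - lo).
Proof.
  intros Hlh Hz. pose proof (exp_ineq1_le (lo - z)). pose proof (exp_ineq1_le (hi - z)).
  assert (E1 : exp lo = exp z * exp (lo - z)) by (rewrite <- exp_plus; f_equal; ring).
  assert (E2 : exp hi = exp z * exp (hi - z)) by (rewrite <- exp_plus; f_equal; ring).
  pose proof (exp_pos z).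
  apply (Rmult_le_reg_r (hi - lo)). lra.
  unfold Rdiv. rewrite Rmult_assoc, Rinv_l, Rmult_1_r by lra.
  rewrite E1, E2.
  assert ((hi - z) * (exp z * (1 + (lo - z))) <= (hi - z) * (exp z * exp (lo - z))).
  { apply Rmult_le_compat_l. lra. apply Rmult_le_compat_l; lra. }
  assert ((z - lo) * (exp z * (1 + (hi - z))) <= (z - lo) * (exp z * exp (hi - z))).
  { apply Rmult_le_compat_l. lra. apply Rmult_le_compat_l; lra. }
  nra.
Qed.

Lemma hoeffding_lemma l (p z : nat -> R) lo hi : lo <= 0 -> 0 <= hi ->
  (forall y, In y l -> 0 <= p y) -> lsum l p = 1 -> lsum l (fun y => p y * z y) = 0 ->
  (forall y, In y l -> lo <= z y <= hi) ->
  lsum l (fun y => p y * exp (z y)) <= exp ((hi - lo) ^ 2 / 8).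
Proof.
  intros Hlo Hhi Hp Hs Hm Hz. destruct (Req_dec lo hi) as [Heq|Hne].
  - rewrite (lsum_ext l _ p), Hs, <- exp_0. apply exp_le.
    assert (0 <= (hi - lo) ^ 2) by apply pow2_ge_0. lra.
    intros y Hy. destruct (Hz y Hy). replace (z y) with 0 by lra. rewrite exp_0. ring.
  - apply Rle_trans with (lsum l (fun y => p y * (((hi - z y) * exp lo + (z y - lo) * exp hi) / (hi - lo)))).
    { apply lsum_le. intros y Hy. apply Rmult_le_compat_l; auto. apply exp_le_chord; auto. lra. }
    rewrite (lsum_ext l _ (fun y => (/ (hi - lo) * (hi * exp lo - lo * exp hi)) * p y
                                   + (/ (hi - lo) * (exp hi - exp lo)) * (p y * z y))).
    2: { intros. field. lra. }
    rewrite lsum_plus, !lsum_scal, Hs, Hm.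
    replace (/ (hi - lo) * (hi * exp lo - lo * exp hi) * 1 + / (hi - lo) * (exp hi - exp lo) * 0)
      with ((hi * exp lo - lo * exp hi) / (hi - lo)) by (field; lra).
    apply hoeffding_two_point; lra.
Qed.

(** * Exponential moments of a vector martingale under the Luce model *)

Definition sum_over (L : list (list nat)) (F : list nat -> R) : R :=
  fold_right (fun ys acc => F ys + acc) 0 L.

Definition path_prob (S : nat -> list nat) (th : nat -> R) (j : nat) (ys : list nat) : R :=
  rprod j (fun t => luce th (S t) (yat ys t)).

Lemma prob_sum_over S m th ev :
  prob S m th ev = sum_over (outcomes S m) (fun ys => if ev ys then path_prob S th m ys else 0).
Proof. reflexivity. Qed.

Lemma sum_over_ext L F G : (forall ys, In ys L -> F ys = G ys) -> sum_over L F = sum_over L G.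
Proof. induction L; simpl; intros H; auto. rewrite H, IHL; auto. Qed.

Lemma sum_over_le L F G : (forall ys, In ys L -> F ys <= G ys) -> sum_over L F <= sum_over L G.
Proof. induction L; simpl; intros H. lra. apply Rplus_le_compat; auto. Qed.

Lemma sum_over_minus L F G : sum_over L (fun ys => F ys - G ys) = sum_over L F - sum_over L G.
Proof. induction L; simpl. ring. rewrite IHL. ring. Qed.

Lemma sum_over_scal L c F : sum_over L (fun ys => c * F ys) = c * sum_over L F.
Proof. induction L; simpl. ring. rewrite IHL. ring. Qed.

Lemma sum_over_outcomes_S S j F : sum_over (outcomes S (Datatypes.S j)) F =
  sum_over (outcomes S j) (fun ys => lsum (S j) (fun i => F (ys ++ [i]))).
Proof.
  assert (Happ : forall L1 L2, sum_over (L1 ++ L2) F = sum_over L1 F + sum_over L2 F).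
  { induction L1 as [|ys L1 IH]; simpl; intros. ring. rewrite IH. ring. }
  assert (Hmap : forall ys l, sum_over (map (fun i => ys ++ [i]) l) F = lsum l (fun i => F (ys ++ [i]))).
  { induction l as [|i l IH]; simpl; auto. now rewrite IH. }
  simpl. induction (outcomes S j) as [|ys L IHL]; simpl; auto.
  now rewrite Happ, IHL, Hmap.
Qed.

Lemma In_outcomes S j ys : In ys (outcomes S j) ->
  length ys = j /\ (forall t, (t < j)%nat -> In (yat ys t) (S t)).
Proof.
  revert ys. induction j; intros ys H.
  - destruct H as [<-|[]]. split; auto. intros; lia.
  - simpl in H. apply in_flat_map in H. destruct H as [zs [Hz Hy]].
    apply in_map_iff in Hy. destruct Hy as [i [<- Hi]].
    destruct (IHj zs Hz) as [Hl Ht]. split.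
    + rewrite length_app. simpl. lia.
    + intros t Htj. unfold yat. destruct (Nat.eq_dec t j) as [->|].
      * rewrite <- Hl at 1. now rewrite nth_middle.
      * rewrite app_nth1 by lia. apply Ht. lia.
Qed.

Lemma yat_app_lt ys i t : (t < length ys)%nat -> yat (ys ++ [i]) t = yat ys t.
Proof. intros H. unfold yat. now apply app_nth1. Qed.

Lemma yat_app_length ys i : yat (ys ++ [i]) (length ys) = i.
Proof. apply nth_middle. Qed.

Lemma rprod_ext n f g : (forall i, (i < n)%nat -> f i = g i) -> rprod n f = rprod n g.
Proof. induction n; simpl; intros H; auto. rewrite IHn, H; auto. Qed.

Lemma path_prob_snoc S th j ys i : length ys = j ->
  path_prob S th (Datatypes.S j) (ys ++ [i]) = path_prob S th j ys * luce th (S j) i.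
Proof.
  intros <-. unfold path_prob. simpl. rewrite yat_app_length. f_equal.
  apply rprod_ext. intros t Ht. now rewrite yat_app_lt.
Qed.

Lemma lsum_exp_pos th l : l <> [] -> 0 < lsum l (fun v => exp (th v)).
Proof.
  destruct l as [|a l]. congruence. intros _. rewrite lsum_cons.
  pose proof (exp_pos (th a)).
  assert (0 <= lsum l (fun v => exp (th v))) by (apply lsum_nonneg; intros; left; apply exp_pos).
  lra.
Qed.

Lemma luce_nonneg th l i : 0 <= luce th l i.
Proof.
  unfold luce. destruct l as [|a l]. simpl. rewrite Rdiv_0_r. lra.
  left. apply Rdiv_lt_0_compat. apply exp_pos. apply lsum_exp_pos. congruence.
Qed.

Lemma luce_sum th l : l <> [] -> lsum l (luce th l) = 1.
Proof.
  intros H. unfold luce. pose proof (lsum_exp_pos th l H).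
  rewrite (lsum_ext l _ (fun i => / lsum l (fun v => exp (th v)) * exp (th i)))
    by (intros; unfold Rdiv; ring).
  rewrite lsum_scal. field. lra.
Qed.

Lemma path_prob_nonneg S th j ys : 0 <= path_prob S th j ys.
Proof.
  unfold path_prob. induction j; simpl. lra. apply Rmult_le_pos; auto. apply luce_nonneg.
Qed.

Lemma path_prob_total S th m j : (j <= m)%nat -> (forall t, (t < m)%nat -> S t <> []) ->
  sum_over (outcomes S j) (path_prob S th j) = 1.
Proof.
  intros Hj HS. induction j.
  - simpl. unfold path_prob. simpl. ring.
  - rewrite sum_over_outcomes_S, <- IHj by lia. apply sum_over_ext. intros ys Hys.
    destruct (In_outcomes S j ys Hys) as [Hl _].
    rewrite (lsum_ext _ _ (fun i => path_prob S th j ys * luce th (S j) i))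
      by (intros; now apply path_prob_snoc).
    rewrite lsum_scal, luce_sum. ring. apply HS. lia.
Qed.

(* Expand [|x + g y|^2]; the cross term [2 lam x . g y] is handled by Hoeffding's lemma. *)
Lemma exp_sqnorm_increment_le n l (p : nat -> R) (g : nat -> nat -> R) c2 rho lam x :
  0 <= lam -> (forall y, In y l -> 0 <= p y) -> lsum l p = 1 ->
  lsum l (fun y => p y * dot n x (g y)) = 0 ->
  (forall y, In y l -> sqnorm n (g y) <= c2) ->
  (exists lo hi, lo <= 0 <= hi /\ (hi - lo) ^ 2 <= rho * sqnorm n x /\
      forall y, In y l -> lo <= dot n x (g y) <= hi) ->
  lsum l (fun y => p y * exp (lam * sqnorm n (fun i => x i + g y i))) <=
  exp (lam * (1 + lam * rho / 2) * sqnorm n x + lam * c2).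
Proof.
  intros Hlam Hp Hp1 Hmean Hnorm [lo [hi [[Hlo Hhi] [Hr Hb]]]].
  apply Rle_trans with
    (lsum l (fun y => exp (lam * sqnorm n x + lam * c2) * (p y * exp (2 * lam * dot n x (g y))))).
  { apply lsum_le. intros y Hy. rewrite sqnorm_plus.
    rewrite (Rmult_comm (exp _)), Rmult_assoc. apply Rmult_le_compat_l; auto.
    rewrite <- exp_plus. apply exp_le. pose proof (Hnorm y Hy). nra. }
  rewrite lsum_scal.
  assert (Hhoef : lsum l (fun y => p y * exp (2 * lam * dot n x (g y)))
                  <= exp ((2 * lam * hi - 2 * lam * lo) ^ 2 / 8)).
  { apply hoeffding_lemma; auto; try nra.
    - rewrite (lsum_ext l _ (fun y => (2 * lam) * (p y * dot n x (g y)))) by (intros; ring).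
      rewrite lsum_scal, Hmean. ring.
    - intros y Hy. destruct (Hb y Hy). split; nra. }
  eapply Rle_trans. apply Rmult_le_compat_l. left; apply exp_pos. exact Hhoef.
  rewrite <- exp_plus. apply exp_le.
  assert (lam ^ 2 * (hi - lo) ^ 2 <= lam ^ 2 * (rho * sqnorm n x)).
  { apply Rmult_le_compat_l; auto. apply pow2_ge_0. }
  nra.
Qed.

Definition increment_sum (g : nat -> nat -> nat -> R) (ys : list nat) (j : nat) : nat -> R :=
  fun i => rsum j (fun t => g t (yat ys t) i).

Section SqnormMGF.
Variables (S : nat -> list nat) (th : nat -> R) (n m : nat) (g : nat -> nat -> nat -> R).
Variables (c2 rho : R).
Hypothesis S_nonempty : forall t, (t < m)%nat -> S t <> [].
Hypothesis g_mean0 : forall t x, (t < m)%nat ->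
  lsum (S t) (fun y => luce th (S t) y * dot n x (g t y)) = 0.
Hypothesis g_sqnorm : forall t y, (t < m)%nat -> In y (S t) -> sqnorm n (g t y) <= c2.
Hypothesis g_range : forall t x, (t < m)%nat ->
  exists lo hi, lo <= 0 <= hi /\ (hi - lo) ^ 2 <= rho * sqnorm n x /\
    forall y, In y (S t) -> lo <= dot n x (g t y) <= hi.

Definition sqnorm_mgf (j : nat) (lam : R) : R :=
  sum_over (outcomes S j)
    (fun ys => path_prob S th j ys * exp (lam * sqnorm n (increment_sum g ys j))).

Lemma sqnorm_mgf_step j lam : (j < m)%nat -> 0 <= lam ->
  sqnorm_mgf (Datatypes.S j) lam <= exp (lam * c2) * sqnorm_mgf j (lam * (1 + lam * rho / 2)).
Proof.
  intros Hj Hlam. unfold sqnorm_mgf. rewrite sum_over_outcomes_S, <- sum_over_scal.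
  apply sum_over_le. intros ys Hys. destruct (In_outcomes S j ys Hys) as [Hl _].
  rewrite (lsum_ext _ _ (fun i => path_prob S th j ys *
             (luce th (S j) i * exp (lam * sqnorm n (fun k => increment_sum g ys j k + g j i k))))).
  2: { intros i Hi. rewrite path_prob_snoc by auto.
       rewrite (sqnorm_ext n _ (fun k => increment_sum g ys j k + g j i k)). ring.
       intros k _. unfold increment_sum. simpl. f_equal.
       - apply rsum_ext. intros t Ht. rewrite yat_app_lt; auto. lia.
       - rewrite <- Hl, yat_app_length. reflexivity. }
  rewrite lsum_scal.
  apply Rle_trans with (path_prob S th j ys *
    exp (lam * (1 + lam * rho / 2) * sqnorm n (increment_sum g ys j) + lam * c2)).
  - apply Rmult_le_compat_l. apply path_prob_nonneg.
    apply exp_sqnorm_increment_le; auto using luce_nonneg, luce_sum.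
  - rewrite exp_plus. right. ring.
Qed.

Lemma sqnorm_mgf_mono j l1 l2 : l1 <= l2 -> sqnorm_mgf j l1 <= sqnorm_mgf j l2.
Proof.
  intros H. apply sum_over_le. intros ys _. apply Rmult_le_compat_l. apply path_prob_nonneg.
  apply exp_le. apply Rmult_le_compat_r; auto. apply sqnorm_nonneg.
Qed.

(* The parameters [lam_j = 1 / (A - rho (m - j) / 2)] are chosen so that
   [lam_(j+1) (1 + lam_(j+1) rho / 2) <= lam_j]. *)
Lemma sqnorm_mgf_bound A : 0 <= c2 -> 0 <= rho -> rho / 2 * INR m < A ->
  forall j, (j <= m)%nat ->
  sqnorm_mgf j (/ (A - rho / 2 * (INR m - INR j))) <= exp (INR j * c2 / (A - rho / 2 * INR m)).
Proof.
  intros Hc Hr HA. induction j; intros Hj.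
  - unfold sqnorm_mgf, path_prob, increment_sum, sqnorm. simpl.
    rewrite (rsum_ext n _ (fun _ => 0)), rsum_0 by (intros; simpl; ring).
    rewrite Rmult_0_r, Rmult_0_l, Rdiv_0_l, exp_0. lra.
  - set (h := rho / 2). set (u := A - h * (INR m - INR (Datatypes.S j))).
    assert (Hm : INR (Datatypes.S j) <= INR m) by (apply le_INR; lia).
    assert (Hh : 0 <= h) by (unfold h; lra).
    assert (Hu0 : 0 < A - h * INR m) by (unfold h; lra).
    assert (Hu : A - h * INR m <= u) by (unfold u; pose proof (pos_INR (Datatypes.S j)); nra).
    assert (Huh : u - h = A - h * (INR m - INR j)) by (unfold u; rewrite S_INR; ring).
    assert (Hup : 0 < u - h) by (rewrite Huh; pose proof (pos_INR j); nra).
    eapply Rle_trans. apply sqnorm_mgf_step. lia. left; apply Rinv_0_lt_compat; lra.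
    eapply Rle_trans. apply Rmult_le_compat_l. left; apply exp_pos.
    apply sqnorm_mgf_mono with (l2 := / (A - h * (INR m - INR j))).
    { rewrite <- Huh. apply (Rmult_le_reg_r (u * (u - h))). nra.
      replace (/ u * (1 + / u * rho / 2) * (u * (u - h))) with (u - h * h / u)
        by (unfold h; field; lra).
      replace (/ (u - h) * (u * (u - h))) with u by (field; lra).
      assert (0 <= h * h / u) by (apply Rdiv_le_0_compat; nra). lra. }
    eapply Rle_trans. apply Rmult_le_compat_l. left; apply exp_pos. apply IHj. lia.
    rewrite <- exp_plus. apply exp_le. rewrite S_INR.
    assert (/ u * c2 <= c2 / (A - h * INR m)).
    { unfold Rdiv. rewrite Rmult_comm. apply Rmult_le_compat_l; auto.
      apply Rinv_le_contravar; auto. }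
    unfold h in *. unfold Rdiv in *. nra.
Qed.

(* Markov's inequality applied to [exp (|G_m|^2 / A)]. *)
Lemma prob_ge_of_sqnorm_tail A tau (ev : list nat -> bool) :
  0 <= c2 -> 0 <= rho -> rho / 2 * INR m < A ->
  (forall ys, In ys (outcomes S m) -> ev ys = false -> tau < sqnorm n (increment_sum g ys m)) ->
  1 - exp (- tau / A) * exp (INR m * c2 / (A - rho / 2 * INR m)) <= prob S m th ev.
Proof.
  intros Hc Hr HA Hev.
  assert (HA0 : 0 < A) by (pose proof (pos_INR m); nra).
  pose proof (sqnorm_mgf_bound A Hc Hr HA m (Nat.le_refl m)) as Hmgf.
  rewrite Rminus_diag, Rmult_0_r, Rminus_0_r in Hmgf.
  rewrite prob_sum_over, <- (path_prob_total S th m m) by auto.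
  enough (sum_over (outcomes S m) (path_prob S th m)
          - sum_over (outcomes S m) (fun ys => if ev ys then path_prob S th m ys else 0)
          <= exp (- tau / A) * sqnorm_mgf m (/ A)).
  { assert (exp (- tau / A) * sqnorm_mgf m (/ A)
            <= exp (- tau / A) * exp (INR m * c2 / (A - rho / 2 * INR m))).
    { apply Rmult_le_compat_l; auto. left; apply exp_pos. }
    lra. }
  unfold sqnorm_mgf. rewrite <- sum_over_scal, <- sum_over_minus. apply sum_over_le.
  intros ys Hys. pose proof (path_prob_nonneg S th m ys). destruct (ev ys) eqn:He.
  - rewrite Rminus_diag. pose proof (exp_pos (- tau / A)).
    pose proof (exp_pos (/ A * sqnorm n (increment_sum g ys m))).
    apply Rmult_le_pos; [lra|]. apply Rmult_le_pos; lra.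
  - pose proof (Hev ys Hys He).
    rewrite Rminus_0_r, Rmult_comm, Rmult_assoc, <- exp_plus.
    rewrite <- (Rmult_1_r (path_prob S th m ys)) at 1. apply Rmult_le_compat_l; auto.
    rewrite <- exp_0. apply exp_le.
    replace (/ A * sqnorm n (increment_sum g ys m) + - tau / A)
      with ((sqnorm n (increment_sum g ys m) - tau) / A) by (field; lra).
    apply Rdiv_le_0_compat; lra.
Qed.

End SqnormMGF.

(** * The score of the pseudo-likelihood *)

(* Gradient at [th] of the term of [ell] contributed by the choice [y] from [S t]. *)
Definition score (S : nat -> list nat) (th : nat -> R) (t y i : nat) : R :=
  lsum (remove_elt (S t) y)
    (fun v => pij th v y * ((if Nat.eqb i y then 1 else 0) - (if Nat.eqb i v then 1 else 0))).

Lemma dot_score_remove_elt n S th t y x : (y < n)%nat -> (forall v, In v (S t) -> (v < n)%nat) ->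
  dot n x (score S th t y) = lsum (remove_elt (S t) y) (fun v => pij th v y * (x y - x v)).
Proof.
  intros Hy Hv. unfold dot, score.
  rewrite (rsum_ext n _ (fun i => lsum (remove_elt (S t) y) (fun v =>
     pij th v y * (x i * (if Nat.eqb y i then 1 else 0)) - pij th v y * (x i * (if Nat.eqb v i then 1 else 0))))).
  2: { intros i _. rewrite <- lsum_scal. apply lsum_ext. intros v _.
       rewrite (Nat.eqb_sym y i), (Nat.eqb_sym v i). ring. }
  rewrite <- lsum_rsum. apply lsum_ext. intros v Hvin. apply In_remove_elt in Hvin.
  rewrite rsum_minus, !rsum_scal, !rsum_delta by (auto; apply Hv; tauto). ring.
Qed.

Lemma dot_score n S th t y x : (y < n)%nat -> (forall v, In v (S t) -> (v < n)%nat) ->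
  dot n x (score S th t y) = lsum (S t) (fun v => pij th v y * (x y - x v)).
Proof. intros Hy Hv. rewrite dot_score_remove_elt by auto. apply lsum_remove_elt. ring. Qed.

(* The weight [luce y * pij v y] of the pair [(y, v)] is symmetric in [y] and [v]. *)
Lemma score_mean0 n S th t x : (forall v, In v (S t) -> (v < n)%nat) -> S t <> [] ->
  lsum (S t) (fun y => luce th (S t) y * dot n x (score S th t y)) = 0.
Proof.
  intros Hv Hne. set (l := S t) in *.
  pose proof (lsum_exp_pos th l Hne) as HZ.
  set (W := fun y v => exp (th y) * exp (th v) /
                       (lsum l (fun u => exp (th u)) * (exp (th y) + exp (th v)))).
  assert (HW : forall y v, W y v = W v y).
  { intros y v. unfold W. pose proof (exp_pos (th y)); pose proof (exp_pos (th v)).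
    field. split; lra. }
  rewrite (lsum_ext l _ (fun y => lsum l (fun v => W y v * x y) - lsum l (fun v => W y v * x v))).
  - rewrite lsum_minus, (lsum_swap l l (fun y v => W y v * x v)).
    rewrite (lsum_ext l (fun v => lsum l (fun y => W y v * x v)) (fun y => lsum l (fun v => W y v * x y))).
    ring. intros y _. apply lsum_ext. intros v _. now rewrite HW.
  - intros y Hy. rewrite dot_score by auto. rewrite <- lsum_minus, <- lsum_scal. apply lsum_ext.
    intros v _. unfold W, luce, pij. pose proof (exp_pos (th y)); pose proof (exp_pos (th v)).
    field. split; lra.
Qed.

Lemma score_sqnorm_le n S th t y k : NoDup (S t) -> length (S t) = k -> In y (S t) ->
  (forall v, In v (S t) -> (v < n)%nat) ->
  sqnorm n (score S th t y) <= INR k * (INR k - 1).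
Proof.
  intros Hnd Hk Hy Hv. set (g := score S th t y). set (l := remove_elt (S t) y).
  set (s := lsum l (fun v => pij th v y)).
  assert (gy : g y = s).
  { apply lsum_ext. intros v [_ Hvy]%In_remove_elt.
    rewrite Nat.eqb_refl. destruct (Nat.eqb_spec y v). congruence. ring. }
  assert (gv : forall v, In v l -> g v = - pij th v y).
  { intros v Hvin. pose proof Hvin as [_ Hvy]%In_remove_elt. unfold g, score.
    destruct (Nat.eqb_spec v y). congruence.
    rewrite (lsum_ext _ _ (fun u => (-1) * (pij th u y * (if Nat.eqb v u then 1 else 0))))
      by (intros; ring).
    rewrite lsum_scal, lsum_delta; auto using NoDup_remove_elt. ring. }
  rewrite sqnorm_dot. unfold g at 2. rewrite dot_score_remove_elt by auto. fold l.
  rewrite (lsum_ext _ _ (fun v => s * pij th v y + pij th v y * pij th v y))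
    by (intros v Hvin; rewrite gy, gv; auto; ring).
  rewrite lsum_plus, lsum_scal. fold s.
  assert (Hlen : INR (length l) = INR k - 1).
  { assert (1 <= k)%nat by (rewrite <- Hk; destruct (S t); [destruct Hy|simpl; lia]).
    unfold l. rewrite length_remove_elt, minus_INR, Hk by (auto; lia). reflexivity. }
  assert (Hs : s <= INR k - 1).
  { rewrite <- Hlen, <- (Rmult_1_r (INR _)), <- lsum_const.
    apply lsum_le. intros; apply pij_le_1. }
  assert (Hs0 : 0 <= s) by (apply lsum_nonneg; intros; left; apply pij_pos).
  assert (lsum l (fun v => pij th v y * pij th v y) <= s).
  { apply lsum_le. intros. pose proof (pij_pos th i y). pose proof (pij_le_1 th i y). nra. }
  nra.
Qed.

(* Squared width of the range of [x . score]; for pairs the Cauchy-Schwarz value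
   [4 k (k - 1) = 8] would be too large for the choice [tail_scale 2] below. *)
Definition score_range_sq (k : nat) : R :=
  if Nat.eq_dec k 2 then 2 else 4 * (INR k * (INR k - 1)).

Lemma score_range_cauchy_schwarz n S th t k x : NoDup (S t) -> length (S t) = k ->
  (forall v, In v (S t) -> (v < n)%nat) ->
  exists lo hi, lo <= 0 <= hi /\ (hi - lo) ^ 2 <= 4 * (INR k * (INR k - 1)) * sqnorm n x /\
    forall y, In y (S t) -> lo <= dot n x (score S th t y) <= hi.
Proof.
  intros Hnd Hk Hv. set (c2 := INR k * (INR k - 1)).
  assert (Hc2 : 0 <= c2).
  { unfold c2. destruct k. simpl; lra. rewrite S_INR. pose proof (pos_INR k). nra. }
  pose proof (sqnorm_nonneg n x).
  set (r := sqrt (c2 * sqnorm n x)).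
  assert (Hr : 0 <= r) by apply sqrt_pos.
  assert (Hr2 : r * r = c2 * sqnorm n x) by (apply sqrt_sqrt; nra).
  exists (- r), r. split; [lra|split; [nra|]].
  intros y Hy. pose proof (cauchy_schwarz n x (score S th t y)) as Hcs.
  pose proof (score_sqnorm_le n S th t y k Hnd Hk Hy Hv) as Hg. fold c2 in Hg.
  assert (dot n x (score S th t y) ^ 2 <= r * r).
  { rewrite Hr2. eapply Rle_trans. apply Hcs. rewrite (Rmult_comm c2).
    apply Rmult_le_compat_l; auto. }
  split; nra.
Qed.

Lemma lsum_sq_le_sqnorm n l x : NoDup l -> (forall i, In i l -> (i < n)%nat) ->
  lsum l (fun i => x i ^ 2) <= sqnorm n x.
Proof.
  intros Hnd Hb. rewrite (lsum_as_rsum l n) by auto. apply rsum_le.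
  intros i _. destruct (in_dec Nat.eq_dec i l). lra. apply pow2_ge_0.
Qed.

Lemma score_range_pair n S th t x : NoDup (S t) -> length (S t) = 2%nat ->
  (forall v, In v (S t) -> (v < n)%nat) ->
  exists lo hi, lo <= 0 <= hi /\ (hi - lo) ^ 2 <= 2 * sqnorm n x /\
    forall y, In y (S t) -> lo <= dot n x (score S th t y) <= hi.
Proof.
  intros Hnd Hk Hv.
  pose proof (lsum_sq_le_sqnorm n (S t) x Hnd Hv) as Hn.
  assert (Hdot : forall y, In y (S t) ->
            dot n x (score S th t y) = lsum (S t) (fun v => pij th v y * (x y - x v)))
    by (intros; apply dot_score; auto).
  destruct (S t) as [|a [|c [|d l]]]; simpl in Hk; try lia.
  simpl in Hn. set (D := x a - x c).
  assert (Ea : dot n x (score S th t a) = pij th c a * D).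
  { rewrite Hdot by (simpl; auto). simpl. unfold D. ring. }
  assert (Ec : dot n x (score S th t c) = - (pij th a c * D)).
  { rewrite Hdot by (simpl; auto). simpl. unfold D. ring. }
  pose proof (pij_sym th a c). pose proof (pij_pos th a c). pose proof (pij_pos th c a).
  assert (HD : D ^ 2 <= 2 * sqnorm n x).
  { unfold D. assert (0 <= (x a + x c) ^ 2) by apply pow2_ge_0. nra. }
  destruct (Rle_dec 0 D).
  - exists (- (pij th a c * D)), (pij th c a * D). split. split; nra. split.
    + replace (pij th c a * D - - (pij th a c * D)) with D by nra. auto.
    + intros y [<-|[<-|[]]]; [rewrite Ea|rewrite Ec]; split; nra.
  - exists (pij th c a * D), (- (pij th a c * D)). split. split; nra. split.
    + replace (- (pij th a c * D) - pij th c a * D) with (- D) by nra. nra.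
    + intros y [<-|[<-|[]]]; [rewrite Ea|rewrite Ec]; split; nra.
Qed.

Lemma score_range n S th t k x : NoDup (S t) -> length (S t) = k ->
  (forall v, In v (S t) -> (v < n)%nat) ->
  exists lo hi, lo <= 0 <= hi /\ (hi - lo) ^ 2 <= score_range_sq k * sqnorm n x /\
    forall y, In y (S t) -> lo <= dot n x (score S th t y) <= hi.
Proof.
  intros Hnd Hk Hv. unfold score_range_sq. destruct (Nat.eq_dec k 2) as [->|].
  - now apply score_range_pair.
  - now apply score_range_cauchy_schwarz.
Qed.

(** * Laplacians and the spectral gap *)

Definition quad_form n (L : nat -> nat -> R) (x : nat -> R) : R :=
  rsum n (fun i => x i * rsum n (fun j => L i j * x j)).

Section Laplacian.
Variables (n : nat) (M : nat -> nat -> R).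
Hypothesis M_sym : forall i j, M i j = M j i.
Hypothesis M_diag : forall i, M i i = 0.

Lemma Lap_sym i j : Lap n M i j = Lap n M j i.
Proof. unfold Lap. rewrite Nat.eqb_sym. destruct (Nat.eqb_spec j i) as [->|]; [reflexivity|now rewrite M_sym]. Qed.

Lemma Lap_row x i : (i < n)%nat ->
  rsum n (fun j => Lap n M i j * x j) = rsum n (fun j => M i j) * x i - rsum n (fun j => M i j * x j).
Proof.
  intros Hi. rewrite <- (rsum_delta n i (fun j => rsum n (fun l => M i l) * x j)) by auto.
  rewrite <- rsum_minus. apply rsum_ext. intros j Hj. unfold Lap.
  destruct (Nat.eqb_spec i j) as [->|]. rewrite M_diag. ring. ring.
Qed.

Lemma Lap_rowsum0 i : (i < n)%nat -> rsum n (fun j => Lap n M i j) = 0.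
Proof.
  intros Hi. pose proof (Lap_row (fun _ => 1) i Hi) as H. cbv beta in H.
  rewrite (rsum_ext n (fun j => Lap n M i j * 1) (fun j => Lap n M i j)) in H by (intros; ring).
  rewrite H, (rsum_ext n (fun j => M i j * 1) (fun j => M i j)) by (intros; ring). ring.
Qed.

Lemma quad_form_Lap x :
  quad_form n (Lap n M) x = / 2 * rsum n (fun i => rsum n (fun j => M i j * (x i - x j) ^ 2)).
Proof.
  unfold quad_form.
  rewrite (rsum_ext n _ (fun i => rsum n (fun j => M i j * x i * x i) - rsum n (fun j => M i j * x i * x j))).
  2: { intros i Hi. rewrite Lap_row by auto.
       rewrite (rsum_ext n (fun j => M i j * x i * x i) (fun j => (x i * x i) * M i j)) by (intros; ring).
       rewrite (rsum_ext n (fun j => M i j * x i * x j) (fun j => x i * (M i j * x j))) by (intros; ring).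
       rewrite !rsum_scal. change (rsum n (M i)) with (rsum n (fun j => M i j)). ring. }
  rewrite (rsum_ext n (fun i => rsum n (fun j => M i j * (x i - x j) ^ 2))
    (fun i => rsum n (fun j => M i j * x i * x i) + rsum n (fun j => M i j * x j * x j)
              - 2 * rsum n (fun j => M i j * x i * x j))).
  2: { intros i Hi. rewrite <- rsum_scal, <- rsum_plus, <- rsum_minus. apply rsum_ext; intros; ring. }
  rewrite !rsum_minus, rsum_plus, rsum_scal.
  rewrite (rsum_swap n n (fun i j => M i j * x j * x j)).
  rewrite (rsum_ext n (fun j => rsum n (fun i => M i j * x j * x j)) (fun i => rsum n (fun j => M i j * x i * x i)))
    by (intros i _; apply rsum_ext; intros j _; now rewrite M_sym).
  field.
Qed.

End Laplacian.

Section Spectral.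
Variables (n : nat) (V : nat -> nat -> R).
Hypothesis V_orthonormal : forall a c, (a < n)%nat -> (c < n)%nat ->
  rsum n (fun i => V a i * V c i) = if Nat.eqb a c then 1 else 0.

Definition coord (x : nat -> R) (a : nat) : R := rsum n (fun j => V a j * x j).

Lemma coord_expand x i : (i < n)%nat -> x i = rsum n (fun a => coord x a * V a i).
Proof.
  intros Hi. unfold coord.
  transitivity (rsum n (fun j => x j * rsum n (fun a => V a j * V a i))).
  - rewrite (rsum_ext n _ (fun j => x j * (if Nat.eqb i j then 1 else 0))).
    now rewrite rsum_delta.
    intros j Hj. now rewrite (OrthonormalBasis.orthonormal_cols_of_rows n V V_orthonormal j i),
      (Nat.eqb_sym j i) by auto.
  - rewrite rsum_mul_rsum. apply rsum_ext; intros a _.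
    rewrite Rmult_comm, <- rsum_scal. apply rsum_ext; intros; ring.
Qed.

Lemma rsum_mul_expand w f :
  rsum n (fun i => w i * rsum n (fun a => f a * V a i)) = rsum n (fun a => f a * coord w a).
Proof.
  rewrite rsum_mul_rsum. apply rsum_ext. intros a _. unfold coord. rewrite <- rsum_scal.
  apply rsum_ext. intros; ring.
Qed.

Lemma parseval x y : rsum n (fun i => x i * y i) = rsum n (fun a => coord x a * coord y a).
Proof.
  rewrite <- rsum_mul_expand. apply rsum_ext. intros i Hi. rewrite <- coord_expand by auto. ring.
Qed.

Variables (L : nat -> nat -> R) (mu : nat -> R).
Hypothesis V_eigen : forall a i, (a < n)%nat -> (i < n)%nat ->
  rsum n (fun j => L i j * V a j) = mu a * V a i.

Lemma quad_form_coord x : quad_form n L x = rsum n (fun a => mu a * coord x a ^ 2).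
Proof.
  unfold quad_form.
  rewrite (rsum_ext n _ (fun i => x i * rsum n (fun a => (coord x a * mu a) * V a i))).
  - rewrite rsum_mul_expand. apply rsum_ext; intros; ring.
  - intros i Hi. f_equal.
    rewrite (rsum_ext n (fun j => L i j * x j) (fun j => L i j * rsum n (fun a => coord x a * V a j)))
      by (intros j Hj; now rewrite <- coord_expand by auto).
    rewrite rsum_mul_rsum. apply rsum_ext. intros a Ha.
    rewrite Rmult_assoc, <- V_eigen, <- rsum_scal by auto. apply rsum_ext; intros; ring.
Qed.

Hypothesis L_sym : forall i j, (i < n)%nat -> (j < n)%nat -> L i j = L j i.
Hypothesis L_rowsum0 : forall i, (i < n)%nat -> rsum n (fun j => L i j) = 0.

Lemma coord_ones a : (a < n)%nat -> mu a <> 0 -> coord (fun _ => 1) a = 0.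
Proof.
  intros Ha Hmu. apply (Rmult_eq_reg_l (mu a)); auto. rewrite Rmult_0_r.
  unfold coord. rewrite <- rsum_scal.
  rewrite (rsum_ext n _ (fun i => rsum n (fun j => L i j * V a j))) by (intros; rewrite V_eigen; auto; ring).
  rewrite rsum_swap, (rsum_ext n _ (fun j => V a j * rsum n (fun i => L j i))).
  - rewrite (rsum_ext n _ (fun _ => 0)). apply rsum_0. intros j Hj. rewrite L_rowsum0; auto. ring.
  - intros j Hj. rewrite <- rsum_scal. apply rsum_ext. intros i Hi. rewrite L_sym; auto. ring.
Qed.

Hypothesis mu_sorted : forall a c, (a <= c)%nat -> (c < n)%nat -> mu a <= mu c.

(* [mu 1 > 0] forces [V 0] to span the constants, to which [x] is orthogonal. *)
Lemma spectral_gap_le x : (2 <= n)%nat -> 0 < mu 1%nat -> rsum n x = 0 ->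
  mu 1%nat * sqnorm n x <= quad_form n L x.
Proof.
  intros Hn Hmu Hx. set (n' := (n - 1)%nat). assert (En : n = S n') by lia.
  assert (Hones : forall a, (a < n')%nat -> coord (fun _ => 1) (S a) = 0).
  { intros a Ha. apply coord_ones. lia.
    assert (mu 1%nat <= mu (S a)) by (apply mu_sorted; lia). lra. }
  assert (Hones0 : INR n = coord (fun _ => 1) O * coord (fun _ => 1) O).
  { rewrite <- rsum_const_1, (rsum_ext _ _ (fun i => 1 * 1)), parseval by (intros; ring).
    rewrite En, rsum_S_tail0; auto. intros a Ha. rewrite Hones; auto. ring. }
  assert (Hx0 : coord x O = 0).
  { assert (E : coord (fun _ => 1) O * coord x O = 0).
    { rewrite <- Hx, (rsum_ext _ x (fun i => 1 * x i)), parseval by (intros; ring).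
      rewrite En, rsum_S_tail0; auto. intros a Ha. rewrite Hones; auto. ring. }
    pose proof (lt_0_INR n ltac:(lia)).
    destruct (Rmult_integral _ _ E) as [H0|]; auto. rewrite H0 in Hones0. lra. }
  rewrite quad_form_coord. unfold sqnorm.
  rewrite (rsum_ext _ (fun i => x i ^ 2) (fun i => x i * x i)), parseval by (intros; ring).
  rewrite En, !rsum_shift, Hx0, Rmult_0_r, Rplus_0_l, <- rsum_scal.
  replace (mu 0%nat * 0 ^ 2) with 0 by ring. rewrite Rplus_0_l.
  apply rsum_le. intros a Ha.
  assert (mu 1%nat <= mu (S a)) by (apply mu_sorted; lia).
  assert (0 <= coord x (S a) * coord x (S a)) by apply Rle_0_sqr. nra.
Qed.

End Spectral.

Definition mem_ind (l : list nat) (i : nat) : R := if in_dec Nat.eq_dec i l then 1 else 0.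

Lemma Mmat_offdiag n m S i j : i <> j ->
  Mmat n m S i j = INR n / INR m * rsum m (fun t => mem_ind (S t) i * mem_ind (S t) j).
Proof.
  intros H. unfold Mmat. destruct (Nat.eqb_spec i j). contradiction. f_equal. apply rsum_ext.
  intros t _. unfold mem_ind. destruct (in_dec Nat.eq_dec i (S t)), (in_dec Nat.eq_dec j (S t)); ring.
Qed.

Lemma Mmat_sym n m S i j : Mmat n m S i j = Mmat n m S j i.
Proof.
  destruct (Nat.eq_dec i j) as [->|]. reflexivity.
  rewrite !Mmat_offdiag by auto. f_equal. apply rsum_ext. intros; ring.
Qed.

Lemma Mmat_diag n m S i : Mmat n m S i i = 0.
Proof. unfold Mmat. now rewrite Nat.eqb_refl. Qed.

Lemma Mmat_sqdiff_sum n m S x :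
  (forall t, (t < m)%nat -> NoDup (S t) /\ (forall i, In i (S t) -> (i < n)%nat)) ->
  rsum n (fun i => rsum n (fun j => Mmat n m S i j * (x i - x j) ^ 2)) =
  INR n / INR m * rsum m (fun t => lsum (S t) (fun i => lsum (S t) (fun j => (x i - x j) ^ 2))).
Proof.
  intros HS.
  rewrite (rsum_ext n _ (fun i => INR n / INR m * rsum n (fun j =>
             rsum m (fun t => mem_ind (S t) i * mem_ind (S t) j * (x i - x j) ^ 2)))).
  2: { intros i Hi. rewrite <- rsum_scal. apply rsum_ext. intros j Hj.
       destruct (Nat.eq_dec i j) as [->|].
       - rewrite Mmat_diag, Rminus_diag, (rsum_ext m _ (fun _ => 0)), rsum_0 by (intros; ring).
         ring.
       - rewrite Mmat_offdiag, Rmult_assoc, (Rmult_comm (rsum _ _)), <- rsum_scal by auto.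
         f_equal. apply rsum_ext; intros; ring. }
  rewrite rsum_scal. f_equal.
  rewrite (rsum_ext n _ (fun i => rsum m (fun t => rsum n (fun j =>
             mem_ind (S t) i * mem_ind (S t) j * (x i - x j) ^ 2)))) by (intros; apply rsum_swap).
  rewrite rsum_swap. apply rsum_ext. intros t Ht. destruct (HS t Ht) as [Hnd Hb].
  rewrite (lsum_as_rsum (S t) n) by auto. apply rsum_ext. intros i Hi.
  unfold mem_ind. destruct (in_dec Nat.eq_dec i (S t)).
  - rewrite (lsum_as_rsum (S t) n) by auto. apply rsum_ext. intros j Hj.
    destruct (in_dec Nat.eq_dec j (S t)); ring.
  - rewrite (rsum_ext n _ (fun _ => 0)) by (intros; ring). apply rsum_0.
Qed.

(* The star [a -- v] dominates the complete graph on [l]. *)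
Lemma lsum_sqdiff_le_star l (a : R) (x : nat -> R) :
  lsum l (fun i => lsum l (fun j => (x i - x j) ^ 2))
  <= 2 * INR (length l) * lsum l (fun v => (a - x v) ^ 2).
Proof.
  set (k := INR (length l)). set (s1 := lsum l x). set (s2 := lsum l (fun v => x v ^ 2)).
  assert (E1 : lsum l (fun v => (a - x v) ^ 2) = k * a ^ 2 - 2 * a * s1 + s2).
  { rewrite (lsum_ext l _ (fun v => (a ^ 2 + x v ^ 2) - 2 * a * x v)) by (intros; ring).
    rewrite lsum_minus, lsum_plus, lsum_const, lsum_scal. unfold k, s1, s2. ring. }
  assert (E2 : lsum l (fun i => lsum l (fun j => (x i - x j) ^ 2)) = 2 * k * s2 - 2 * s1 ^ 2).
  { rewrite (lsum_ext l _ (fun i => k * x i ^ 2 - 2 * s1 * x i + s2)).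
    - rewrite lsum_plus, lsum_minus, !lsum_scal, lsum_const. unfold k, s1, s2. ring.
    - intros i _. rewrite (lsum_ext l _ (fun j => (x i ^ 2 + x j ^ 2) - (2 * x i) * x j)) by (intros; ring).
      rewrite lsum_minus, lsum_plus, lsum_const, lsum_scal. unfold k, s1, s2. ring. }
  rewrite E1, E2. assert (0 <= (k * a - s1) ^ 2) by apply pow2_ge_0. nra.
Qed.

(** * The deterministic error bound *)

Definition choice_sqdiff (S : nat -> list nat) (m : nat) (ys : list nat) (x : nat -> R) : R :=
  rsum m (fun t => lsum (remove_elt (S t) (yat ys t)) (fun v => (x (yat ys t) - x v) ^ 2)).

Lemma dot_increment_sum n g ys m x :
  dot n x (increment_sum g ys m) = rsum m (fun t => dot n x (g t (yat ys t))).
Proof. unfold dot, increment_sum. rewrite rsum_mul_rsum. reflexivity. Qed.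

Lemma ln_pij_sub_le b ths thh y v :
  -b <= ths y <= b -> -b <= ths v <= b -> -b <= thh y <= b -> -b <= thh v <= b ->
  ln (pij thh y v) - ln (pij ths y v) <=
  pij ths v y * ((thh y - ths y) - (thh v - ths v))
  - exp (-(2*b)) / 8 * ((thh y - ths y) - (thh v - ths v)) ^ 2.
Proof.
  intros. rewrite !pij_logistic.
  replace ((thh y - ths y) - (thh v - ths v)) with ((thh y - thh v) - (ths y - ths v)) by ring.
  replace (logistic (ths v - ths y)) with (1 - logistic (ths y - ths v))
    by (rewrite <- !pij_logistic; pose proof (pij_sym ths y v); lra).
  apply ln_logistic_strong_concave; lra.
Qed.

Definition concavity_modulus (b : R) (k n m : nat) (mu1 : R) : R :=
  exp (-(2*b)) / 8 * INR m * mu1 / (INR k * INR n).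

Lemma concavity_modulus_pos b k n m mu1 : (1 <= k)%nat -> (1 <= n)%nat -> (1 <= m)%nat -> 0 < mu1 ->
  0 < concavity_modulus b k n m mu1.
Proof.
  intros Hk Hn Hm Hmu. unfold concavity_modulus.
  pose proof (lt_0_INR k ltac:(lia)). pose proof (lt_0_INR n ltac:(lia)).
  pose proof (lt_0_INR m ltac:(lia)). pose proof (exp_pos (-(2*b))).
  apply Rdiv_lt_0_compat; [|nra]. repeat apply Rmult_lt_0_compat; lra.
Qed.

Section DeterministicBound.
Variables (n m k : nat) (S : nat -> list nat) (b : R) (ths thh : nat -> R) (ys : list nat).
Hypothesis S_wf : forall t, (t < m)%nat ->
  NoDup (S t) /\ length (S t) = k /\ (forall i, In i (S t) -> (i < n)%nat).
Hypothesis ys_wf : forall t, (t < m)%nat -> In (yat ys t) (S t).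
Hypothesis ths_Theta : in_Theta n b ths.
Hypothesis thh_Theta : in_Theta n b thh.
Hypothesis m_pos : (1 <= m)%nat.

Let err : nat -> R := fun i => thh i - ths i.

Lemma k_pos : (1 <= k)%nat.
Proof.
  destruct (S_wf O ltac:(lia)) as [_ [<- _]]. pose proof (ys_wf O ltac:(lia)) as Hy.
  destruct (S O). destruct Hy. simpl; lia.
Qed.

Lemma ell_sub_le :
  ell S m thh ys - ell S m ths ys
  <= dot n err (increment_sum (score S ths) ys m) - exp (-(2*b)) / 8 * choice_sqdiff S m ys err.
Proof.
  destruct ths_Theta as [Hsb _], thh_Theta as [Hhb _].
  unfold ell, choice_sqdiff. rewrite dot_increment_sum, <- rsum_scal, <- !rsum_minus.
  apply rsum_le. intros t Ht. destruct (S_wf t Ht) as [_ [_ Hb]].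
  assert (Hy : (yat ys t < n)%nat) by auto.
  rewrite dot_score_remove_elt by auto. rewrite <- lsum_scal, <- !lsum_minus.
  apply lsum_le. intros v [Hv _]%In_remove_elt. assert (Hvn : (v < n)%nat) by auto.
  pose proof (ln_pij_sub_le b ths thh (yat ys t) v (Hsb _ Hy) (Hsb _ Hvn) (Hhb _ Hy) (Hhb _ Hvn)).
  unfold err. lra.
Qed.

Lemma choice_sqdiff_ge mu V : (2 <= n)%nat ->
  sorted_eigendecomp n (Lap n (Mmat n m S)) mu V -> 0 < mu 1%nat ->
  INR m * mu 1%nat / (INR k * INR n) * sqnorm n err <= choice_sqdiff S m ys err.
Proof.
  intros Hn [Horth [Heig Hsort]] Hmu.
  assert (Hk : 0 < INR k) by (apply lt_0_INR; pose proof k_pos; lia).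
  assert (Hnpos : 0 < INR n) by (apply lt_0_INR; lia).
  assert (Hmpos : 0 < INR m) by (apply lt_0_INR; lia).
  assert (Hgap : mu 1%nat * sqnorm n err <= quad_form n (Lap n (Mmat n m S)) err).
  { apply (spectral_gap_le n V Horth); auto.
    - intros i j _ _. apply Lap_sym, Mmat_sym.
    - intros i Hi. apply Lap_rowsum0; auto. apply Mmat_diag.
    - destruct ths_Theta as [_ Hs], thh_Theta as [_ Hh].
      unfold err. rewrite rsum_minus, Hh, Hs. ring. }
  rewrite quad_form_Lap, Mmat_sqdiff_sum in Hgap by (auto using Mmat_sym, Mmat_diag;
    intros t Ht; destruct (S_wf t Ht) as [? [? ?]]; auto).
  set (cliques := rsum m (fun t => lsum (S t) (fun i => lsum (S t) (fun j => (err i - err j) ^ 2))))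
    in Hgap.
  assert (Hstar : cliques <= 2 * INR k * choice_sqdiff S m ys err).
  { unfold cliques, choice_sqdiff. rewrite <- rsum_scal. apply rsum_le. intros t Ht.
    destruct (S_wf t Ht) as [_ [Hlen _]]. rewrite lsum_remove_elt by ring.
    rewrite <- Hlen. apply lsum_sqdiff_le_star. }
  apply (Rmult_le_reg_l (2 * INR k)). lra.
  eapply Rle_trans; [|exact Hstar].
  replace (2 * INR k * (INR m * mu 1%nat / (INR k * INR n) * sqnorm n err))
    with (2 * INR m / INR n * (mu 1%nat * sqnorm n err)) by (field; lra).
  apply Rle_trans with (2 * INR m / INR n * (/ 2 * (INR n / INR m * cliques))).
  - apply Rmult_le_compat_l; [apply Rdiv_le_0_compat|]; lra.
  - right. field. lra.
Qed.

Lemma error_sqnorm_le mu V : (2 <= n)%nat ->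
  sorted_eigendecomp n (Lap n (Mmat n m S)) mu V -> 0 < mu 1%nat ->
  ell S m ths ys <= ell S m thh ys ->
  concavity_modulus b k n m (mu 1%nat) ^ 2 * sqnorm n err
  <= sqnorm n (increment_sum (score S ths) ys m).
Proof.
  intros Hn Hsd Hmu Hopt.
  set (G := increment_sum (score S ths) ys m). set (kap := concavity_modulus b k n m (mu 1%nat)).
  assert (Hkap : 0 < kap) by (apply concavity_modulus_pos; auto using k_pos; lia).
  assert (Hlow : kap * sqnorm n err <= dot n err G).
  { pose proof ell_sub_le as Hell. pose proof (choice_sqdiff_ge mu V Hn Hsd Hmu).
    pose proof (exp_pos (-(2*b))).
    replace (kap * sqnorm n err)
      with (exp (-(2*b)) / 8 * (INR m * mu 1%nat / (INR k * INR n) * sqnorm n err))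
      by (unfold kap, concavity_modulus, Rdiv; ring).
    assert (exp (-(2*b)) / 8 * (INR m * mu 1%nat / (INR k * INR n) * sqnorm n err)
            <= exp (-(2*b)) / 8 * choice_sqdiff S m ys err) by (apply Rmult_le_compat_l; lra).
    fold G in Hell. lra. }
  pose proof (dot_le_young n err G kap Hkap).
  apply (Rmult_le_reg_l (/ (2 * kap))). apply Rinv_0_lt_compat; lra.
  replace (/ (2 * kap) * (kap ^ 2 * sqnorm n err)) with (kap / 2 * sqnorm n err) by (field; lra).
  lra.
Qed.

End DeterministicBound.

(* Chosen so that [tail_scale_spec] holds, which bounds the exponential moment of [|G_m|^2]
   at [1 / (tail_scale k * m)] by [e^2]. *)
Definition tail_scale (k : nat) : R := 8 * (INR k - 1) ^ 3 / INR k.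

Lemma score_range_sq_pos k : (2 <= k)%nat -> 0 < score_range_sq k.
Proof.
  intros Hk. unfold score_range_sq. destruct Nat.eq_dec. lra.
  pose proof (le_INR 2 k ltac:(lia)). simpl in *. nra.
Qed.

Lemma tail_scale_spec k : (2 <= k)%nat ->
  score_range_sq k / 2 < tail_scale k /\
  INR k * (INR k - 1) <= 2 * (tail_scale k - score_range_sq k / 2).
Proof.
  intros Hk. unfold tail_scale, score_range_sq. destruct (Nat.eq_dec k 2) as [->|].
  - simpl INR. split; field_simplify; lra.
  - assert (Hk3 : INR 3 <= INR k) by (apply le_INR; lia). simpl in Hk3.
    set (x := INR k) in *.
    assert (H16 : 5 * x ^ 2 <= 16 * (x - 1) ^ 2) by nra.
    split.
    + apply (Rmult_lt_reg_r x). lra.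
      replace (8 * (x - 1) ^ 3 / x * x) with (8 * (x - 1) ^ 3) by (field; lra). nra.
    + apply (Rmult_le_reg_r x). lra.
      replace (2 * (8 * (x - 1) ^ 3 / x - 4 * (x * (x - 1)) / 2) * x)
        with (16 * (x - 1) ^ 3 - 4 * x * x * (x - 1)) by (field; lra).
      nra.
Qed.

Lemma tail_prob_le n m k : (1 <= m)%nat -> (2 <= k)%nat -> (2 <= n)%nat ->
  exp (- (tail_scale k * INR m * (ln (INR n) + 2)) / (tail_scale k * INR m))
  * exp (INR m * (INR k * (INR k - 1)) / (tail_scale k * INR m - score_range_sq k / 2 * INR m))
  <= 3 / INR n.
Proof.
  intros Hm Hk Hn. destruct (tail_scale_spec k Hk) as [Hgam Hc2].
  pose proof (score_range_sq_pos k Hk).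
  assert (Hmpos : 0 < INR m) by (apply lt_0_INR; lia).
  assert (Hnpos : 0 < INR n) by (apply lt_0_INR; lia).
  assert (E1 : - (tail_scale k * INR m * (ln (INR n) + 2)) / (tail_scale k * INR m) = - ln (INR n) - 2)
    by (field; split; nra).
  assert (E2 : INR m * (INR k * (INR k - 1)) / (tail_scale k * INR m - score_range_sq k / 2 * INR m)
               <= 2).
  { apply (Rmult_le_reg_r (tail_scale k * INR m - score_range_sq k / 2 * INR m)). nra.
    unfold Rdiv. rewrite Rmult_assoc, Rinv_l by nra. nra. }
  rewrite E1, <- exp_plus. apply Rle_trans with (exp (- ln (INR n))).
  - apply exp_le. lra.
  - rewrite exp_Ropp, exp_ln by lra. pose proof (Rinv_0_lt_compat _ Hnpos). unfold Rdiv. lra.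
Qed.

Lemma error_bound_eq n m k b mu1 : (1 <= m)%nat -> (1 <= k)%nat -> (1 <= n)%nat -> 0 < mu1 ->
  / INR n * (tail_scale k * INR m * (ln (INR n) + 2)) / concavity_modulus b k n m mu1 ^ 2
  = (16 * sqrt 2 * sqrt (INR k * (INR k - 1) ^ 3) * exp (2 * b)) ^ 2
    * (INR n * (ln (INR n) + 2)) / mu1 ^ 2 * (1 / INR m).
Proof.
  intros Hm Hk Hn Hmu.
  assert (0 < INR m) by (apply lt_0_INR; lia). assert (1 <= INR k) by (apply (le_INR 1); lia).
  assert (0 < INR n) by (apply lt_0_INR; lia). pose proof (exp_pos (2 * b)).
  assert (Hs2 : sqrt 2 ^ 2 = 2) by (rewrite <- Rsqr_pow2; apply Rsqr_sqrt; lra).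
  assert (Hsk : sqrt (INR k * (INR k - 1) ^ 3) ^ 2 = INR k * (INR k - 1) ^ 3).
  { rewrite <- Rsqr_pow2. apply Rsqr_sqrt. apply Rmult_le_pos; [lra|apply pow_le; lra]. }
  unfold concavity_modulus, tail_scale. rewrite exp_Ropp, !Rpow_mult_distr, Hs2, Hsk.
  field. repeat split; lra.
Qed.

Lemma MSE_le_of_sqnorm n th1 th2 kap tau : 0 < kap -> (1 <= n)%nat ->
  kap ^ 2 * sqnorm n (fun i => th1 i - th2 i) <= tau -> MSE n th1 th2 <= / INR n * tau / kap ^ 2.
Proof.
  intros Hkap Hn H. assert (0 < INR n) by (apply lt_0_INR; lia).
  unfold MSE. unfold Rdiv. rewrite Rmult_assoc. apply Rmult_le_compat_l. left; now apply Rinv_0_lt_compat.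
  apply (Rmult_le_reg_l (kap ^ 2)). apply pow_lt; lra.
  replace (kap ^ 2 * (tau * / kap ^ 2)) with tau by (field; lra). exact H.
Qed.

Lemma length_le_of_bounded l n : NoDup l -> (forall i, In i l -> (i < n)%nat) -> (length l <= n)%nat.
Proof.
  intros Hnd Hb. rewrite <- (length_seq n 0). apply NoDup_incl_length; auto.
  intros i Hi. apply in_seq. specialize (Hb i Hi). lia.
Qed.

Lemma sample_threshold_pos n m k b : (2 <= n)%nat -> (1 <= m)%nat -> (2 <= k)%nat ->
  0 < 128 * (INR k - 1) ^ 2 * exp (2 * b) * INR n * ln (INR n) / INR m.
Proof.
  intros Hn Hm Hk.
  assert (0 < ln (INR n)) by (rewrite <- ln_1; apply ln_increasing; [lra|apply (lt_INR 1); lia]).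
  assert (0 < INR k - 1) by (pose proof (le_INR 2 k ltac:(lia)); simpl in *; lra).
  pose proof (exp_pos (2 * b)). pose proof (lt_0_INR n ltac:(lia)). pose proof (lt_0_INR m ltac:(lia)).
  apply Rdiv_lt_0_compat; auto. repeat apply Rmult_lt_0_compat; try apply pow_lt; lra.
Qed.

Section ScoreTail.
Variables (n m k : nat) (S : nat -> list nat) (th : nat -> R).
Hypothesis m_pos : (1 <= m)%nat.
Hypothesis k_ge2 : (2 <= k)%nat.
Hypothesis S_wf : forall t, (t < m)%nat ->
  NoDup (S t) /\ length (S t) = k /\ (forall i, In i (S t) -> (i < n)%nat).

Lemma n_ge2 : (2 <= n)%nat.
Proof.
  destruct (S_wf O ltac:(lia)) as [Hnd [Hlen Hb]].
  pose proof (length_le_of_bounded _ _ Hnd Hb). lia.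
Qed.

Lemma prob_ge_of_score_tail (ev : list nat -> bool) :
  (forall ys, In ys (outcomes S m) -> ev ys = false ->
     tail_scale k * INR m * (ln (INR n) + 2) < sqnorm n (increment_sum (score S th) ys m)) ->
  1 - 3 / INR n <= prob S m th ev.
Proof.
  intros Hev. destruct (tail_scale_spec k k_ge2) as [Hgam Hc2].
  assert (HSne : forall t, (t < m)%nat -> S t <> []).
  { intros t Ht Hnil. destruct (S_wf t Ht) as [_ [Hl _]]. rewrite Hnil in Hl. simpl in Hl. lia. }
  pose proof (tail_prob_le n m k m_pos k_ge2 n_ge2).
  eapply Rle_trans; [|apply (prob_ge_of_sqnorm_tail S th n m (score S th)
      (INR k * (INR k - 1)) (score_range_sq k)) with (A := tail_scale k * INR m)]; auto; try lra.
  - intros t x Ht. apply score_mean0; auto. apply S_wf, Ht.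
  - intros t y Ht Hy. destruct (S_wf t Ht) as [? [? ?]]. now apply score_sqnorm_le.
  - intros t x Ht. destruct (S_wf t Ht) as [? [? ?]]. now apply score_range.
  - pose proof (le_INR 2 k ltac:(lia)). simpl in *. nra.
  - left. now apply score_range_sq_pos.
  - pose proof (lt_0_INR m ltac:(lia)). nra.
Qed.

End ScoreTail.

Theorem theorem5
  (n m k : nat) (S : nat -> list nat) (b : R) (thstar : nat -> R)
  (thhat : list nat -> nat -> R) (mu : nat -> R) (V : nat -> nat -> R) :
  (1 <= m)%nat ->
  (2 <= k)%nat ->
  (forall t, (t < m)%nat ->
     NoDup (S t) /\ length (S t) = k /\ (forall i, In i (S t) -> (i < n)%nat)) ->
  in_Theta n b thstar ->
  (forall ys, In ys (outcomes S m) ->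
     in_Theta n b (thhat ys) /\
     forall th, in_Theta n b th -> ell S m th ys <= ell S m (thhat ys) ys) ->
  sorted_eigendecomp n (Lap n (Mmat n m S)) mu V ->
  mu 1%nat >= 128 * (INR k - 1) ^ 2 * exp (2 * b) * INR n * ln (INR n) / INR m ->
  let D := 16 * sqrt 2 * sqrt (INR k * (INR k - 1) ^ 3) * exp (2 * b) in
  prob S m thstar
    (fun ys => Rleb (MSE n (thhat ys) thstar)
                    (D ^ 2 * (INR n * (ln (INR n) + 2)) / (mu 1%nat) ^ 2 * (1 / INR m)))
  >= 1 - 3 / INR n.
Proof.
  intros Hm Hk HS Hths Hhat Hsd Hmu D.
  pose proof (n_ge2 n m k S Hm Hk HS) as Hn.
  (* The sample-size condition is only needed to make [mu 1] positive. *)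
  assert (Hmu1 : 0 < mu 1%nat) by (pose proof (sample_threshold_pos n m k b Hn Hm Hk); lra).
  apply Rle_ge, (prob_ge_of_score_tail n m k); auto.
  intros ys Hys Hev. apply Rnot_le_lt. intros Htail.
  unfold Rleb in Hev. destruct Rle_dec as [_|Hfail]; [discriminate|apply Hfail].
  destruct (Hhat ys Hys) as [Hth Hopt]. destruct (In_outcomes S m ys Hys) as [_ Hyst].
  unfold D. rewrite <- error_bound_eq by (lia || lra).
  apply MSE_le_of_sqnorm; [apply concavity_modulus_pos; auto; lia|lia|].
  eapply Rle_trans; [|exact Htail].
  apply (error_sqnorm_le n m k S b thstar (thhat ys) ys HS Hyst Hths Hth Hm mu V); auto.
Qed.
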